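(* For every graph $H$ with $\delta(H)\ge1$, either $str(H)=|V(H)|+\delta(H)$, or $H$ is a proper subgraph of a graph $G$ with $\delta(G)=\delta(H)$ and $str(G)=|V(G)|+\delta(G)$.
   Context: For a graph $G$ of order $p$, a numbering is a bijection $f:V(G)\to[1,p]$; $str_f(G)=\max\{f(u)+f(v): uv\in E(G)\}$ and $str(G)=\min_f str_f(G)$. $\delta(G)$ denotes the minimum degree. *)

From mathcomp Require Import all_boot.
Set Implicit Arguments. Unset Strict Implicit. Unset Printing Implicit Defensive.

Definition simple_graph (T : finType) (e : rel T) : Prop :=
  symmetric e /\ irreflexive e.

Definition deg (T : finType) (e : rel T) (v : T) : nat := #|[set u | e v u]|.

(* minimum degree delta(G); for the empty vertex set this is 0 *)
Definition mindeg (T : finType) (e : rel T) : nat :=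
  \big[minn/#|T|]_(v : T) deg e v.

(* A numbering: a bijection V -> [1,p], encoded as a bijection f : T -> 'I_p
   (p = #|T|) with label f v + 1. *)
Definition numbering (T : finType) (f : {ffun T -> 'I_#|T|}) : bool := injectiveb f.

Definition strf (T : finType) (e : rel T) (f : {ffun T -> 'I_#|T|}) : nat :=
  \max_(u : T) \max_(v : T | e u v) ((f u).+1 + (f v).+1).

(* str(G) = min over numberings f of str_f(G); numberings always exist and
   str_f <= 2p, so the default value 2p is never the result. *)
Definition strength (T : finType) (e : rel T) : nat :=
  \big[minn/(#|T|).*2]_(f : {ffun T -> 'I_#|T|} | numbering f) strf e f.

(* H = (T,e) is (isomorphic to) a proper subgraph of G = (T',e'):
   an injective edge-preserving map h, and G has an extra vertex or an extra edge. *)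
Definition proper_subgraph (T T' : finType) (e : rel T) (e' : rel T') : Prop :=
  exists h : T -> T',
    [/\ injective h,
        (forall u v, e u v -> e' (h u) (h v)) &
        (#|T| < #|T'| \/ exists u v, e' (h u) (h v) && ~~ e u v)].

From mathcomp Require Import all_boot.
From mathcomp Require Import zify.

Set Implicit Arguments. Unset Strict Implicit. Unset Printing Implicit Defensive.

(* Every graph H with delta(H) >= 1 is a proper subgraph of a graph G with
   delta(G) = delta(H) and str(G) = |V(G)| + delta(G); we always prove this
   second alternative.

   1. A general lower bound: if every vertex of G has degree at least k >= 1,
      then every numbering f has str_f(G) >= p + k.  Indeed the vertex u
      labelled p has at least k neighbours with distinct labels, so one of them
      carries a label >= k.  Hence str(G) >= p + delta(G) whenever delta >= 1.
   2. The threshold graph Thr(n,d) on labels 1..n, with x ~ y iff x <> y and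
      x + y <= n + d, has minimum degree d (for d < n) and, by the identity
      numbering and step 1, strength exactly n + d.
   3. For a simple graph H on m vertices we have 1 <= delta(H) < m, and H
      embeds properly into Thr(2m, delta(H)) by numbering its vertices
      1..m, since any two such labels sum to at most 2m. *)

Lemma bigmin_ge (I : finType) (P : pred I) (F : I -> nat) k x0 :
  k <= x0 -> (forall i, P i -> k <= F i) -> k <= \big[minn/x0]_(i | P i) F i.
Proof.
move=> k_x0 kF; apply: (big_ind (fun x => k <= x)) => // a b ka kb.
by rewrite leq_min ka kb.
Qed.

(* A [minn]-fold is below each of its terms ([minn] has no neutral element,
   so the monoid lemmas of the library do not apply). *)
Lemma bigmin_le (I : finType) (P : pred I) (F : I -> nat) x0 j :
  P j -> \big[minn/x0]_(i | P i) F i <= F j.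
Proof.
move=> Pj; rewrite unlock; have : j \in index_enum I by rewrite mem_index_enum.
elim: (index_enum I) => [|a r IH] //=; rewrite inE => /orP [/eqP <- | j_r].
  by rewrite Pj geq_minl.
by case: (P a) => /=; [apply: leq_trans (geq_minr _ _) (IH j_r) | apply: IH].
Qed.

Lemma card_ord_below p j : #|[set i : 'I_p | i < j]| <= j.
Proof.
rewrite cardE -(size_map val) -[X in _ <= X](size_iota 0).
apply: uniq_leq_size; first by rewrite map_inj_uniq ?enum_uniq //; apply: val_inj.
by move=> x /mapP [i]; rewrite mem_enum inE => i_j ->; rewrite mem_iota.
Qed.

Lemma mindeg_le (T : finType) (e : rel T) (v : T) : mindeg e <= deg e v.
Proof. exact: bigmin_le. Qed.

Lemma mindeg_le_card (T : finType) (e : rel T) : mindeg e <= #|T|.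
Proof.
apply: (big_ind (fun x => x <= #|T|)) => // [a b|v _]; first by lia.
exact: max_card.
Qed.

(* In a loopless graph every vertex misses itself, so delta < p when p > 0;
   for p = 0 the minimum degree is 0. *)
Lemma mindeg_lt_card (T : finType) (e : rel T) :
  irreflexive e -> 0 < mindeg e -> mindeg e < #|T|.
Proof.
move=> irr; case: (pickP (@predT T)) => [v _ | noT] d_gt0; last first.
  have T0 : #|T| = 0 by apply: eq_card0 => v; have := noT v.
  by move: d_gt0; rewrite /mindeg big_pred0 // T0.
apply: leq_ltn_trans (mindeg_le e v) _.
rewrite /deg -cardsT; apply: proper_card; apply/properP; split; first exact: subsetT.
by exists v; rewrite !inE ?irr.
Qed.

(* Step 1 for a single numbering f: the vertex u with the top label p has more
   than k - 1 neighbours, so not all of their labels lie in 1..k-1. *)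
Lemma strf_ge (T : finType) (e : rel T) (f : {ffun T -> 'I_#|T|}) k :
  numbering f -> 0 < #|T| -> 0 < k -> (forall v, k <= deg e v) ->
  #|T| + k <= strf e f.
Proof.
move=> /injectiveP f_inj T_gt0 k_gt0 k_deg.
have top : #|T|.-1 < #|T| by lia.
have [u fu] : exists u, f u = Ordinal top.
  by have /codomP [u ->] := inj_card_onto f_inj (eq_leq (card_ord _)) (Ordinal top); exists u.
have [/existsP [v /andP [euv fv]] | no_high] :=
  boolP [exists v, e u v && (k.-1 <= f v)].
  apply: leq_trans (leq_bigmax_cond u isT).
  apply: leq_trans (leq_bigmax_cond v euv).
  by rewrite fu /= prednK // leq_add2l -[k in k <= _](prednK k_gt0) ltnS.
have low_labels : f @: [set w | e u w] \subset [set i : 'I_#|T| | i < k.-1].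
  apply/subsetP => i /imsetP [w]; rewrite !inE => euw ->.
  by move/existsPn: no_high => /(_ w); rewrite euw /= -ltnNge.
have := leq_trans (subset_leq_card low_labels) (card_ord_below _ _).
by rewrite card_imset //; have := k_deg u; rewrite /deg; lia.
Qed.

Lemma strength_ge (T : finType) (e : rel T) :
  0 < mindeg e -> #|T| + mindeg e <= strength e.
Proof.
move=> d_gt0; apply: bigmin_ge => [|f nf].
  by rewrite -addnn leq_add2l mindeg_le_card.
apply: strf_ge => // [|v]; last exact: mindeg_le.
exact: leq_trans d_gt0 (mindeg_le_card e).
Qed.

(* Step 2: the threshold graph on the labels 1..n (vertex [x : 'I_n] carries
   label [x.+1]), in which two distinct vertices are adjacent iff their labels
   sum to at most [n + d]. *)
Definition threshold (n d : nat) : rel 'I_n :=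
  fun x y => (x != y) && (x.+1 + y.+1 <= n + d).
Arguments threshold : clear implicits.

Lemma threshold_simple n d : simple_graph (threshold n d).
Proof.
split => [x y | x]; last by rewrite /threshold eqxx.
by rewrite /threshold eq_sym addnC.
Qed.

(* Each vertex x is adjacent to the d vertices obtained by skipping x among the
   labels 1..d+1: their labels pair up with x.+1 to at most n + d. *)
Lemma threshold_deg_ge n d (x : 'I_n) : d < n -> d <= deg (threshold n d) x.
Proof.
move=> d_lt_n; have d_le : d <= n.-1 by lia.
pose nbr (i : 'I_d) := lift x (widen_ord d_le i).
have nbr_inj : injective nbr.
  by move=> i j /lift_inj /(congr1 val) /= /val_inj.
rewrite /deg -[X in X <= _](card_ord d) -(card_imset _ nbr_inj).
apply: subset_leq_card; apply/subsetP => _ /imsetP [i _ ->].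
rewrite inE /threshold neq_lift /= /bump.
have := ltn_ord x; have := ltn_ord i; case: leqP => /=; lia.
Qed.

Lemma threshold_deg_last n d (x : 'I_n) :
  x.+1 = n -> deg (threshold n d) x <= d.
Proof.
move=> x_last; apply: leq_trans (card_ord_below n d).
apply: subset_leq_card; apply/subsetP => y; rewrite !inE /threshold.
by case/andP => _; lia.
Qed.

Lemma threshold_mindeg n d : d < n -> mindeg (threshold n d) = d.
Proof.
move=> d_lt_n; have last_lt : n.-1 < n by lia.
apply/eqP; rewrite eqn_leq; apply/andP; split.
  apply: leq_trans (mindeg_le _ (Ordinal last_lt)) _.
  by apply: threshold_deg_last => /=; lia.
apply: bigmin_ge => [|x _]; first by rewrite card_ord; lia.
exact: threshold_deg_ge.
Qed.

(* The identity numbering attains the lower bound of step 1. *)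
Lemma threshold_strength n d :
  0 < d -> d < n -> strength (threshold n d) = n + d.
Proof.
move=> d_gt0 d_lt_n; have n_card : n = #|'I_n| by rewrite card_ord.
pose id_num : {ffun 'I_n -> 'I_#|'I_n|} := [ffun x => cast_ord n_card x].
have id_numbering : numbering id_num.
  by apply/injectiveP => x y; rewrite !ffunE => /(congr1 val) /= /val_inj.
apply/eqP; rewrite eqn_leq; apply/andP; split.
  apply: leq_trans (bigmin_le _ _ id_numbering) _.
  apply/bigmax_leqP => x _; apply/bigmax_leqP => y.
  by rewrite /threshold !ffunE => /andP [].
rewrite [X in X + d]n_card -[X in _ + X](threshold_mindeg d_lt_n).
by apply: strength_ge; rewrite threshold_mindeg.
Qed.

(* Step 3: numbering the vertices of a loopless graph on m vertices by 1..m
   embeds it into any threshold graph on more than m vertices whose bound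
   n + d is at least 2m; the embedding misses a vertex, so it is proper. *)
Lemma threshold_proper_supergraph (T : finType) (e : rel T) n d :
  irreflexive e -> #|T| < n -> #|T| + #|T| <= n + d ->
  proper_subgraph e (threshold n d).
Proof.
move=> irr T_lt_n bound; have T_le_n : #|T| <= n := ltnW T_lt_n.
exists (fun v => widen_ord T_le_n (enum_rank v)); split => //; last by left; rewrite card_ord.
  by move=> u v /(congr1 val) /= /val_inj /enum_rank_inj.
move=> u v euv; rewrite /threshold /=; apply/andP; split.
  apply: contraTneq euv => /(congr1 val) /= /val_inj /enum_rank_inj ->.
  by rewrite irr.
have u_lt : enum_rank u < #|T| := ltn_ord _.
have v_lt : enum_rank v < #|T| := ltn_ord _.
exact: leq_trans (leq_add u_lt v_lt) bound.
Qed.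

Theorem mainTheorem10 (T : finType) (e : rel T) :
  simple_graph e -> 1 <= mindeg e ->
  strength e = #|T| + mindeg e \/
  exists (T' : finType) (e' : rel T'),
    [/\ simple_graph e', proper_subgraph e e', mindeg e' = mindeg e &
        strength e' = #|T'| + mindeg e'].
Proof.
move=> [_ irr] d_gt0; right.
have d_lt_T := mindeg_lt_card irr d_gt0.
have d_lt_2T : mindeg e < #|T| + #|T| by lia.
exists 'I_(#|T| + #|T|), (threshold (#|T| + #|T|) (mindeg e)).
rewrite threshold_mindeg // card_ord; split.
- exact: threshold_simple.
- apply: threshold_proper_supergraph => //; last exact: leq_addr.
  by rewrite -addn1 leq_add2l; apply: leq_ltn_trans d_lt_T.
- by [].
- exact: threshold_strength.
Qed.
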